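(* Let $\Sigma$ be a set, $A\in\mathrm{Abs}(\wp(\Sigma))$ with Galois insertion $(\alpha,\wp(\Sigma),A,\gamma)$, and $F$ a set of functions $f:\wp(\Sigma)^{\sharp(f)}\to\wp(\Sigma)$ with $\sharp(f)\ge1$. Let $\mathcal{L}_{A,F}$ be the language with atoms the elements $a\in A$ and operators the elements of $F$, with semantic structure $\mathcal{S}_{A,F}=(\Sigma,I)$ where $I(a)=\gamma(a)$ and $I(f)=f$. Assume $\mathcal{L}_{A,F}$ is closed under infinite logical conjunction. Then $\mathrm{AD}_{\mathcal{L}_{A,F}}=\mathcal{S}_F(A)$.
   Context: For a language $\mathcal{L}$ (formulae $\varphi::=p\mid f(\varphi_1,..,\varphi_n)$) with semantic structure $(\Sigma,I)$, the concrete semantics is $[\![p]\!]=I(p)$, $[\![f(\varphi_1,..,\varphi_n)]\!]=I(f)([\![\varphi_1]\!],..,[\![\varphi_n]\!])$. $\mathcal{L}$ is closed under infinite logical conjunction if for every $\Phi\subseteq\mathcal{L}$ (including $\varnothing$) there is $\psi$ with $[\![\psi]\!]=\bigcap_{\varphi\in\Phi}[\![\varphi]\!]$ (empty intersection $=\Sigma$). $\mathrm{AD}_{\mathcal{L}}$ is the abstract domain (upper closure operator on $\wp(\Sigma)$) whose image is the set of intersections of subfamilies of $\{[\![\varphi]\!]\mid\varphi\in\mathcal{L}\}$. Abstract domains of $\wp(\Sigma)$ are given by Galois insertions $(\alpha,\wp(\Sigma),A,\gamma)$ and identified with their closures $\gamma\circ\alpha$, ordered pointwise ($\sqsubseteq$: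 more precise). A closure $\rho$ is forward complete for $f$ if $f(\rho(X_1),..,\rho(X_n))=\rho(f(\rho(X_1),..,\rho(X_n)))$ for all $X_i$; $\mathcal{S}_F(A)$, the forward $F$-complete shell of $A$, is the most abstract closure $\rho\sqsubseteq\gamma\circ\alpha$ that is forward complete for every $f\in F$. *)

From mathcomp Require Import all_boot.
Set Implicit Arguments. Unset Strict Implicit. Unset Printing Implicit Defensive.

Definition subs (S : Type) (X Y : S -> Prop) : Prop := forall x, X x -> Y x.

Definition galois_insertion (S A : Type) (leA : A -> A -> Prop)
  (alpha : (S -> Prop) -> A) (gamma : A -> (S -> Prop)) : Prop :=
  [/\ (forall a, leA a a),
      (forall a b c, leA a b -> leA b c -> leA a c),
      (forall a b, leA a b -> leA b a -> a = b),
      (forall X a, leA (alpha X) a <-> subs X (gamma a))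
    & (forall a, alpha (gamma a) = a)].

Definition uco (S : Type) (rho : (S -> Prop) -> (S -> Prop)) : Prop :=
  [/\ (forall X Y, subs X Y -> subs (rho X) (rho Y)),
      (forall X, subs X (rho X))
    & (forall X, rho (rho X) = rho X)].

Definition more_precise (S : Type) (rho1 rho2 : (S -> Prop) -> (S -> Prop)) :=
  forall X, subs (rho1 X) (rho2 X).

Definition fwd_complete (S : Type) (rho : (S -> Prop) -> (S -> Prop)) (n : nat)
  (f : ('I_n -> (S -> Prop)) -> (S -> Prop)) : Prop :=
  forall Xs : 'I_n -> (S -> Prop),
    f (fun i => rho (Xs i)) = rho (f (fun i => rho (Xs i))).

(* F is given by an index type Fidx, arities ar and functions op. *)
Definition is_fwd_shell (S : Type) (Fidx : Type) (ar : Fidx -> nat)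
  (op : forall i, ('I_(ar i) -> (S -> Prop)) -> (S -> Prop))
  (rho rho' : (S -> Prop) -> (S -> Prop)) : Prop :=
  [/\ uco rho', more_precise rho' rho,
      (forall i, fwd_complete rho' (op i))
    & (forall eta, uco eta -> more_precise eta rho ->
         (forall i, fwd_complete eta (op i)) -> more_precise eta rho')].

Inductive form (A Fidx : Type) (ar : Fidx -> nat) : Type :=
  | Atom : A -> form A ar
  | Op : forall i : Fidx, ('I_(ar i) -> form A ar) -> form A ar.
Arguments Atom {A Fidx ar} _.
Arguments Op {A Fidx ar} i _.

Fixpoint sem (S A Fidx : Type) (ar : Fidx -> nat) (gamma : A -> (S -> Prop))
  (op : forall i, ('I_(ar i) -> (S -> Prop)) -> (S -> Prop))
  (phi : form A ar) : S -> Prop :=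
  match phi with
  | Atom a => gamma a
  | Op i args => op i (fun j => sem gamma op (args j))
  end.

(* closure under infinite logical conjunction (empty intersection = S) *)
Definition closed_inf_conj (S A Fidx : Type) (ar : Fidx -> nat)
  (gamma : A -> (S -> Prop))
  (op : forall i, ('I_(ar i) -> (S -> Prop)) -> (S -> Prop)) : Prop :=
  forall Phi : form A ar -> Prop, exists psi : form A ar,
    sem gamma op psi = (fun x => forall phi, Phi phi -> sem gamma op phi x).

(* AD_L: the uco whose image is the set of intersections of subfamilies of
   {[[phi]]}: X |-> intersection of all [[phi]] containing X. *)
Definition AD (S A Fidx : Type) (ar : Fidx -> nat) (gamma : A -> (S -> Prop))
  (op : forall i, ('I_(ar i) -> (S -> Prop)) -> (S -> Prop))
  : (S -> Prop) -> (S -> Prop) :=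
  fun X x => forall phi : form A ar, subs X (sem gamma op phi) -> sem gamma op phi x.

From mathcomp Require Import all_boot.
From Stdlib Require Import ClassicalEpsilon FunctionalExtensionality PropExtensionality.

Set Implicit Arguments.
Unset Strict Implicit.
Unset Printing Implicit Defensive.

(* AD is the Moore closure of the family of formula denotations, so it is a
   uco whose fixpoints are the intersections of denotations; closure under
   conjunction makes these fixpoints exactly the denotations themselves.
   Hence AD is forward complete (an operator applied to denotations is the
   denotation of a compound formula), and it lies below gamma o alpha because
   every gamma a is a denotation.  Conversely a uco below gamma o alpha fixes
   every gamma a, and forward completeness propagates this to every compound
   formula by induction; a monotone map fixing all denotations is more precise
   than their Moore closure. *)

Lemma subs_antisym (S : Type) (X Y : S -> Prop) : subs X Y -> subs Y X -> X = Y.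
Proof.
move=> XY YX; apply: functional_extensionality => x.
by apply: propositional_extensionality; split; [exact: XY | exact: YX].
Qed.

Lemma subs_gamma_alpha (S A : Type) (leA : A -> A -> Prop)
  (alpha : (S -> Prop) -> A) (gamma : A -> (S -> Prop)) :
  galois_insertion leA alpha gamma -> forall X, subs X (gamma (alpha X)).
Proof. by case=> leAA _ _ adj _ X; apply/adj/leAA. Qed.

Lemma extensive_fixes_gamma (S A : Type) (leA : A -> A -> Prop)
  (alpha : (S -> Prop) -> A) (gamma : A -> (S -> Prop))
  (eta : (S -> Prop) -> (S -> Prop)) :
  galois_insertion leA alpha gamma -> (forall X, subs X (eta X)) ->
  more_precise eta (fun X => gamma (alpha X)) ->
  forall a, eta (gamma a) = gamma a.
Proof.
case=> _ _ _ _ alpha_gamma eta_ext eta_prec a.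
by apply: subs_antisym => [x /eta_prec|]; [rewrite alpha_gamma | exact: eta_ext].
Qed.

Section MooreClosure.

Variables (S I : Type) (P : I -> S -> Prop).

Definition moore (X : S -> Prop) : S -> Prop :=
  fun x => forall i, subs X (P i) -> P i x.

Lemma moore_ext X : subs X (moore X).
Proof. by move=> x Xx i XPi; apply: XPi. Qed.

Lemma moore_mono X Y : subs X Y -> subs (moore X) (moore Y).
Proof. by move=> XY x mXx i YPi; apply: mXx => y /XY /YPi. Qed.

Lemma moore_idem X : moore (moore X) = moore X.
Proof.
apply: subs_antisym; last exact: moore_ext.
by move=> x mmXx i XPi; apply: mmXx => y; apply.
Qed.

Lemma uco_moore : uco moore.
Proof. by split; [exact: moore_mono | exact: moore_ext | exact: moore_idem]. Qed.

Lemma moore_fixed i : moore (P i) = P i.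
Proof. by apply: subs_antisym => [x|]; [apply | exact: moore_ext]. Qed.

Lemma moore_least (eta : (S -> Prop) -> (S -> Prop)) :
  (forall X Y, subs X Y -> subs (eta X) (eta Y)) ->
  (forall i, eta (P i) = P i) -> more_precise eta moore.
Proof.
move=> eta_mono eta_fix X x etaXx i /eta_mono/(_ x etaXx).
by rewrite eta_fix.
Qed.

Lemma moore_in_family :
  (forall Q : I -> Prop, exists j, P j = fun x => forall i, Q i -> P i x) ->
  forall X, exists j, moore X = P j.
Proof.
move=> conj X; have [j Pj] := conj (fun i => subs X (P i)).
by exists j; rewrite Pj.
Qed.

End MooreClosure.

Section LanguageClosure.

Variables (S A Fidx : Type) (ar : Fidx -> nat) (gamma : A -> (S -> Prop)).
Variable op : forall i, ('I_(ar i) -> (S -> Prop)) -> (S -> Prop).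
Arguments op : clear implicits.

Local Notation sem := (sem gamma op).
Local Notation AD := (AD gamma op).

Lemma uco_AD : uco AD.
Proof. exact: uco_moore. Qed.

Lemma AD_sem phi : AD (sem phi) = sem phi.
Proof. exact: moore_fixed. Qed.

Lemma AD_sub_gamma (a : A) (X : S -> Prop) :
  subs X (gamma a) -> subs (AD X) (gamma a).
Proof. by move=> Xga x ADXx; apply: (ADXx (Atom a)). Qed.

Lemma fwd_complete_AD : closed_inf_conj gamma op -> forall i, fwd_complete AD (op i).
Proof.
move=> conj i Xs.
have [psi ADXs_psi] : exists psi : 'I_(ar i) -> form A ar,
    forall j, AD (Xs j) = sem (psi j).
  apply: (choice (fun j psi => AD (Xs j) = sem psi)) => j.
  exact: moore_in_family.
have -> : (fun j => AD (Xs j)) = (fun j => sem (psi j)).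
  exact: functional_extensionality ADXs_psi.
exact: esym (AD_sem (Op i psi)).
Qed.

Lemma fwd_complete_fixed_sem (eta : (S -> Prop) -> (S -> Prop)) :
  (forall a, eta (gamma a) = gamma a) ->
  (forall i, fwd_complete eta (op i)) ->
  forall phi, eta (sem phi) = sem phi.
Proof.
move=> eta_gamma eta_fwd; elim=> [a | i args IH] //=.
have -> : (fun j => sem (args j)) = (fun j => eta (sem (args j))).
  by apply: functional_extensionality => j; rewrite IH.
by rewrite -eta_fwd.
Qed.

End LanguageClosure.

Theorem theorem6p5 (S A : Type) (leA : A -> A -> Prop)
  (alpha : (S -> Prop) -> A) (gamma : A -> (S -> Prop))
  (Fidx : Type) (ar : Fidx -> nat)
  (op : forall i, ('I_(ar i) -> (S -> Prop)) -> (S -> Prop)) :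
  galois_insertion leA alpha gamma ->
  (forall i, 0 < ar i) ->
  closed_inf_conj gamma op ->
  is_fwd_shell op (fun X => gamma (alpha X)) (AD gamma op).
Proof.
move=> gi _ conj; split.
- exact: uco_AD.
- by move=> X; apply: AD_sub_gamma; exact: subs_gamma_alpha gi X.
- exact: fwd_complete_AD.
- move=> eta [eta_mono eta_ext _] eta_prec eta_fwd.
  apply: moore_least eta_mono _; apply: fwd_complete_fixed_sem eta_fwd.
  exact: extensive_fixes_gamma gi eta_ext eta_prec.
Qed.
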